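(* Let $(G,\cdot)$ be an abelian group of order $n\ge 2$ which is generated by $r$ elements, let $S$ be a set with $|S|=n$, and let $\mathcal{X}_G$ be the set of all binary operations $*:S\times S\to S$ such that $(S,* )$ is isomorphic to $(G,\cdot)$. Then any query-algorithm with respect to $\mathcal{X}_G$ which solves product-recovering satisfies, for $*$ uniformly distributed on $\mathcal{X}_G$, \[E(N)\ \ge\ n-\frac{n}{\ln n}+\frac12-r.\]
   Context: Let $S$ be a finite set and $\mathcal{X}$ a set of binary operations $*:S\times S\to S$. A query-algorithm with respect to $\mathcal{X}$ is a rooted tree $T$ in which every non-leaf node $v$ is labeled by a pair $(x_v,y_v)\in S^2$ (the query ''$x_v*y_v$''), leaves are unlabeled, and every edge from $v$ to a child is labeled by an element of $S$ (a possible answer), distinct edges leaving the same node having distinct labels. It is required that for every $*\in\mathcal{X}$ there is a path $(v_0,\dots,v_k)$ from the root $v_0$ to a leaf $v_k$ such that for each $0\le i<k$ the edge $(v_i,v_{i+1})$ is labeled $x_{v_i}*y_{v_i}$. This leaf is uniquely determined and is denoted $L( * )$, giving a map $L:\mathcal{X}\to\{\text{leaves of }T\}$. The query-algorithm solves product-recovering if $L$ is a bijection. The number of queries used on $*$ is the depth $N( * )$ of $L( * )$; $E(N)$ denotes its expectation when $*$ is uniformly distributed on $\mathcal{X}$. *)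

From mathcomp Require Import all_boot all_fingroup.
From Stdlib Require Import Reals.
Set Implicit Arguments.
Unset Strict Implicit.
Unset Printing Implicit Defensive.

Definition binop (S : finType) := {ffun S * S -> S}.

Definition iso_to_group (S : finType) (gT : finGroupType) (G : {group gT})
    (op : binop S) : bool :=
  [exists f : {ffun S -> gT},
    [&& injectiveb f, f @: [set: S] == G
      & [forall x : S, forall y : S, f (op (x, y)) == (f x * f y)%g]]].

Definition X_G (S : finType) (gT : finGroupType) (G : {group gT}) : {set binop S} :=
  [set op : binop S | iso_to_group G op].

(* Query trees: a leaf, or a node labelled by a query (x, y) ("x * y"), whose
   children are indexed by (distinct) answers a : S; [ch a = None] means there
   is no edge labelled a. *)
Inductive qtree (S : Type) : Type :=
| Leaf : qtree S
| Node : S -> S -> (S -> option (qtree S)) -> qtree S.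
Arguments Leaf {S}.

(* Leaves are identified by the sequence of edge labels on the path from the
   root to them. *)
Fixpoint leaves (S : finType) (t : qtree S) : seq (seq S) :=
  match t with
  | Leaf => [:: [::]]
  | Node _ _ ch =>
      flatten [seq match ch a with
                   | Some t' => map (cons a) (leaves t')
                   | None => [::]
                   end | a <- enum S]
  end.

Fixpoint run (S : finType) (t : qtree S) (op : binop S) : option (seq S) :=
  match t with
  | Leaf => Some [::]
  | Node x y ch =>
      let a := op (x, y) in
      match ch a with
      | Some t' => omap (cons a) (run t' op)
      | None => None
      end
  end.

(* t is a query-algorithm w.r.t. X which solves product-recovering:
   every op in X reaches a leaf, and L : X -> leaves is a bijection. *)
Definition solves_product_recovering (S : finType) (X : {set binop S})
    (t : qtree S) : Prop :=
  [/\ forall op, op \in X -> exists p, run t op = Some p,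
      {in X &, forall op1 op2, run t op1 = run t op2 -> op1 = op2}
    & forall p, p \in leaves t -> exists2 op, op \in X & run t op = Some p].

Definition nqueries (S : finType) (t : qtree S) (op : binop S) : nat :=
  if run t op is Some p then size p else 0.

Definition expected_queries (S : finType) (X : {set binop S}) (t : qtree S) : R :=
  (INR (\sum_(op in X) nqueries t op) / INR #|X|)%R.
Arguments X_G S {gT} G.

(* Lower bound E(N) >= n - n / ln n + 1/2 - r for recovering a group law of
   order n generated by r elements.

   The proof is an information-theoretic counting argument.
   1. Stirling-type bound ln n! >= (n + 1/2) ln n - n, by a telescoping
      induction based on 2 ln x <= x - 1/x (i.e. t <= sinh t).
   2. Entropy (Kraft) bound: a query tree branching over S which leads every
      op of X to its own leaf satisfies |X| ln |X| <= (sum of depths) ln |S|,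
      hence E(N) >= ln |X| / ln |S|.  Induction on the tree, splitting X by
      the answer to the root query and using the log-sum inequality.
   3. Counting X_G: transporting the law of G to S along the n! bijections
      S -> G gives elements of X_G, and since a map multiplicative on G that
      fixes r generators is the identity, each element of X_G arises at most
      n^r times (record the preimages of the generators): n! <= |X_G| n^r.
   Combining: E(N) >= (ln n! - r ln n) / ln n >= n - n / ln n + 1/2 - r. *)

From HB Require Import structures.
From mathcomp Require Import all_boot all_fingroup.
From Stdlib Require Import Reals Lra.

Set Implicit Arguments.
Unset Strict Implicit.
Unset Printing Implicit Defensive.

Section RealBounds.
Local Open Scope R_scope.

Lemma ln_le x y : 0 < x -> x <= y -> ln x <= ln y.
Proof. by move=> x_gt0 [lt_xy | ->]; [left; apply: ln_increasing | right]. Qed.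

Lemma ln_nat_gt0 (m : nat) : (1 < m)%nat -> 0 < ln (INR m).
Proof. by move=> m_gt1; rewrite -ln_1; apply: ln_increasing; [lra | apply/(lt_INR 1)/ltP]. Qed.

Lemma ln_le_sub1 x : 0 < x -> ln x <= x - 1.
Proof. by move=> x_gt0; have := exp_ineq1_le (ln x); rewrite exp_ln //; lra. Qed.

(* t <= sinh t for t >= 0, since (sinh - id)' = cosh - 1 >= 0. *)
Lemma le_sinh t : 0 <= t -> t <= sinh t.
Proof.
move=> t_ge0.
have incr : increasing (sinh - id)%F.
  apply: (nonneg_derivative_1 _ (derivable_minus _ _ derivable_sinh derivable_id)).
  move=> x; rewrite (derive_pt_eq_0 _ x (cosh x - 1)).
    rewrite /cosh; have := exp_ineq1_le x; have := exp_ineq1_le (- x); lra.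
  exact: derivable_pt_lim_minus (derivable_pt_lim_sinh x) (derivable_pt_lim_id x).
have := incr 0 t t_ge0; rewrite /minus_fct /id /sinh Ropp_0 exp_0; lra.
Qed.

(* 2 ln x <= x - 1/x for x >= 1: the sinh bound at t = ln x. *)
Lemma ln_le_sinh x : 1 <= x -> 2 * ln x <= x - / x.
Proof.
move=> x_ge1; have ln_ge0 : 0 <= ln x by rewrite -ln_1; apply: ln_le; lra.
by have := le_sinh ln_ge0; rewrite /sinh exp_Ropp exp_ln; lra.
Qed.

(* Casts of natural products and powers (expn, as ^ denotes Nat.pow here). *)
Lemma INR_muln (m k : nat) : INR (m * k)%nat = INR m * INR k.
Proof. by rewrite -multE mult_INR. Qed.

Lemma INR_expn (m k : nat) : INR (expn m k) = INR m ^ k.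
Proof. by elim: k => [|k IHk] //; rewrite expnS INR_muln IHk. Qed.

(* One step of the Stirling induction:
   (n + 1/2) ln (1 + 1/n) <= 1 + 1/(4n(n+1)), from ln_le_sinh at 1 + 1/n. *)
Lemma ln_succ_ratio x : 0 < x ->
  (x + / 2) * (ln (x + 1) - ln x) <= 1 + / (4 * x * (x + 1)).
Proof.
move=> x_gt0.
have ratio_ge1 : 1 <= (x + 1) / x.
  by apply: (Rmult_le_reg_r x) => //; field_simplify; lra.
have := ln_le_sinh ratio_ge1.
rewrite Rdiv_def ln_mult ?ln_Rinv; [| lra | lra | exact: Rinv_0_lt_compat].
have -> : (x + 1) * / x - / ((x + 1) * / x) = (2 * x + 1) / (x * (x + 1))
  by field; lra.
move=> bound; apply: (Rmult_le_reg_l 2); first lra.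
apply: Rle_trans (_ : (x + / 2) * ((2 * x + 1) / (x * (x + 1))) <= _).
  have -> : 2 * ((x + / 2) * (ln (x + 1) - ln x))
            = (x + / 2) * (2 * (ln (x + 1) + - ln x)) by ring.
  by apply: Rmult_le_compat_l; lra.
by right; field; lra.
Qed.

(* The sharpened bound ln n! >= (n + 1/2) ln n - n + 3/4 + 1/(4n) telescopes. *)
Lemma ln_fact_lower_strong n : (1 <= n)%nat ->
  3 / 4 + / (4 * INR n) <= ln (INR n`!) - (INR n + / 2) * ln (INR n) + INR n.
Proof.
elim: n => [|[|n] IHn] // _; first by rewrite /= ln_1; lra.
have := IHn isT; set x := INR n.+1 => IH.
have x_gt0 : 0 < x by apply: lt_0_INR; apply/ltP.
rewrite factS INR_muln ln_mult; last 2 first.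
- by apply: lt_0_INR; apply/ltP.
- by apply: lt_0_INR; apply/ltP; apply: fact_gt0.
rewrite S_INR -/x; have := ln_succ_ratio x_gt0.
have : / (4 * x) - / (4 * (x + 1)) = / (4 * x * (x + 1)) by field; lra.
nra.
Qed.

Lemma ln_fact_lower n : (1 <= n)%nat ->
  (INR n + / 2) * ln (INR n) - INR n <= ln (INR n`!).
Proof.
move=> n_ge1; have := ln_fact_lower_strong n_ge1.
have : 0 < / (4 * INR n) by apply/Rinv_0_lt_compat/Rmult_lt_0_compat;
  [lra | apply: lt_0_INR; apply/ltP].
lra.
Qed.

End RealBounds.

HB.instance Definition _ := Monoid.isComLaw.Build R R0 Rplus
  (fun x y z => esym (Rplus_assoc x y z)) Rplus_comm Rplus_0_l.

Section RealSums.
Local Open Scope R_scope.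
Variable I : finType.
Implicit Types (P : pred I) (f g : I -> R).

Lemma INR_sum P (m : I -> nat) :
  INR (\sum_(i | P i) m i)%nat = \big[Rplus/0]_(i | P i) INR (m i).
Proof. by apply: (big_morph INR (fun a b => plus_INR a b)). Qed.

Lemma sumR_mulr P f c :
  \big[Rplus/0]_(i | P i) (f i * c) = (\big[Rplus/0]_(i | P i) f i) * c.
Proof. by elim/big_rec2: _ => [|i x y _ ->]; lra. Qed.

Lemma sumR_const c : \big[Rplus/0]_(i : I) c = INR #|I| * c.
Proof.
rewrite big_const; elim: #|I| => [|k IHk]; first by rewrite /= Rmult_0_l.
by rewrite iterS IHk S_INR; lra.
Qed.

Lemma sumR_le P f g : (forall i, P i -> f i <= g i) ->
  \big[Rplus/0]_(i | P i) f i <= \big[Rplus/0]_(i | P i) g i.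
Proof. by move=> le_fg; elim/big_rec2: _ => [|i x y /le_fg]; lra. Qed.

End RealSums.

Section LogSum.
Local Open Scope R_scope.

(* Tangent bound for x ln x at any c > 0 (from ln u <= u - 1 at u = c / m). *)
Lemma xlnx_tangent (m : nat) c : 0 < c ->
  INR m * ln c + INR m - c <= INR m * ln (INR m).
Proof.
move=> c_gt0; case: m => [|m]; first by rewrite /= !Rmult_0_l; lra.
have m_gt0 : 0 < INR m.+1 by apply: lt_0_INR; apply/ltP.
have := ln_le_sub1 (Rdiv_lt_0_compat _ _ c_gt0 m_gt0).
rewrite Rdiv_def ln_mult ?ln_Rinv //; last exact: Rinv_0_lt_compat.
move/(Rmult_le_compat_l _ _ _ (Rlt_le _ _ m_gt0)).
have -> : INR m.+1 * (c * / INR m.+1 - 1) = c - INR m.+1 by field; lra.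
lra.
Qed.

(* m ln m >= 0 for integers (the case m = 0 reads 0 * ln 0 = 0). *)
Lemma xlnx_ge0 (m : nat) : 0 <= INR m * ln (INR m).
Proof.
case: m => [|m]; first by rewrite /= Rmult_0_l; lra.
apply: Rmult_le_pos; first exact: pos_INR.
by rewrite -ln_1; apply: ln_le; rewrite ?S_INR; have := pos_INR m; lra.
Qed.

Lemma log_sum (I : finType) (m : I -> nat) (M : nat) :
  (0 < #|I|)%nat -> M = (\sum_i m i)%nat ->
  INR M * ln (INR M) - INR M * ln (INR #|I|)
    <= \big[Rplus/0]_i (INR (m i) * ln (INR (m i))).
Proof.
move=> I_gt0 sum_m; have k_gt0 : 0 < INR #|I| by apply: lt_0_INR; apply/ltP.
have sum_ge0 : 0 <= \big[Rplus/0]_i (INR (m i) * ln (INR (m i))).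
  have := sumR_le (P := xpredT) (fun i _ => xlnx_ge0 (m i)).
  by rewrite sumR_const Rmult_0_r.
have [M0 | M_gt0] := posnP M; first by rewrite M0 /= !Rmult_0_l; lra.
have MR_gt0 : 0 < INR M by apply: lt_0_INR; apply/ltP.
pose c := INR M / INR #|I|.
have c_gt0 : 0 < c by apply: Rdiv_lt_0_compat.
have := sumR_le (P := xpredT) (fun i _ => xlnx_tangent (m i) c_gt0).
rewrite !big_split /= sumR_mulr -INR_sum -sum_m sumR_const.
rewrite /c Rdiv_def ln_mult ?ln_Rinv //; last exact: Rinv_0_lt_compat.
have -> : INR #|I| * - (INR M * / INR #|I|) = - INR M by field; lra.
set lk := ln (INR #|I|); move=> bound; apply: Rle_trans _ bound; right; ring.
Qed.

End LogSum.

Lemma qtree_ind' (S : Type) (P : qtree S -> Prop) :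
  P Leaf ->
  (forall x y ch, (forall a t', ch a = Some t' -> P t') -> P (Node x y ch)) ->
  forall t, P t.
Proof.
move=> P_leaf P_node; fix IH 1 => -[|x y ch]; first exact: P_leaf.
apply: P_node => a; case: (ch a) => [t0|] t' ch_a; last discriminate.
rewrite -(Some_inj ch_a); exact: IH.
Qed.

Definition branch (S : finType) (X : {set binop S}) (q : S * S) (a : S) :=
  [set op in X | op q == a].

Lemma sum_by_branch (S : finType) (X : {set binop S}) q (F : binop S -> nat) :
  (\sum_(op in X) F op = \sum_a \sum_(op in branch X q a) F op)%nat.
Proof.
rewrite (partition_big (fun op : binop S => op q) xpredT) //.
by apply: eq_bigr => a _; apply: eq_bigl => op; rewrite inE.
Qed.

Section Branches.
Variables (S : finType) (x y : S) (ch : S -> option (qtree S)) (X : {set binop S}).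
Hypothesis X_runs : forall op, op \in X -> run (Node x y ch) op <> None.
Hypothesis X_inj : {in X &, injective (run (Node x y ch))}.

Lemma branch_in op a : op \in branch X (x, y) a -> op \in X /\ op (x, y) = a.
Proof. by rewrite inE => /andP [? /eqP]. Qed.

Lemma branch_missing a : ch a = None -> branch X (x, y) a = set0.
Proof.
move=> ch_a; apply/setP => op; rewrite !inE.
by apply/negbTE/andP => -[/X_runs op_runs /eqP op_a]; apply: op_runs; rewrite /= op_a ch_a.
Qed.

Lemma branch_child a t' : ch a = Some t' ->
  let Xa := branch X (x, y) a in
  [/\ forall op, op \in Xa -> run t' op <> None,
      {in Xa &, injective (run t')}
    & (\sum_(op in Xa) nqueries (Node x y ch) op
       = \sum_(op in Xa) nqueries t' op + #|Xa|)%nat].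
Proof.
move=> ch_a Xa.
have run_Xa op : op \in Xa -> run (Node x y ch) op = omap (cons a) (run t' op).
  by case/branch_in => _ /= ->; rewrite ch_a.
have Xa_runs op : op \in Xa -> run t' op <> None.
  move=> Xa_op; have := X_runs (branch_in Xa_op).1.
  by rewrite run_Xa //; case: (run t' op).
split=> // [op1 op2 Xa1 Xa2 eq_run|].
  apply: X_inj; [exact: (branch_in Xa1).1 | exact: (branch_in Xa2).1 |].
  by rewrite (run_Xa _ Xa1) (run_Xa _ Xa2) eq_run.
rewrite -sum1_card -big_split /=; apply: eq_bigr => op Xa_op.
rewrite /nqueries (run_Xa _ Xa_op); move: (Xa_runs _ Xa_op).
by case: (run t' op) => [p|] //= _; rewrite addn1.
Qed.

End Branches.

Section Kraft.
Local Open Scope R_scope.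
Variable S : finType.

Lemma kraft_entropy (t : qtree S) (X : {set binop S}) :
  (forall op, op \in X -> run t op <> None) ->
  {in X &, injective (run t)} ->
  INR #|X| * ln (INR #|X|) <= INR (\sum_(op in X) nqueries t op)%nat * ln (INR #|S|).
Proof.
elim/qtree_ind': t X => [|x y ch IH] X X_runs X_inj.
  have card_le1 : (#|X| <= 1)%nat.
    apply: contraT; rewrite -ltnNge => /card_gt1P [op1 [op2 [X1 X2]]].
    by rewrite (X_inj op1 op2) ?eqxx.
  rewrite big1 // /=.
  by case: #|X| card_le1 => [|[|]] // _; rewrite /= ?ln_1 ?Rmult_0_l; lra.
pose Xa := branch X (x, y); set lS := ln (INR #|S|).
(* Each branch costs its own entropy plus one query per op. *)
have per_branch a : INR #|Xa a| * ln (INR #|Xa a|) + INR #|Xa a| * lS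
    <= INR (\sum_(op in Xa a) nqueries (Node x y ch) op)%nat * lS.
  case ch_a: (ch a) => [t'|]; last first.
    by rewrite /Xa (branch_missing X_runs ch_a) cards0 big_set0 /= !Rmult_0_l; lra.
  have [Xa_runs Xa_inj ->] := branch_child X_runs X_inj ch_a.
  have := IH a t' ch_a (Xa a) Xa_runs Xa_inj.
  by rewrite -/lS -/(Xa a) plus_INR Rmult_plus_distr_r; lra.
have card_X : #|X| = (\sum_a #|Xa a|)%nat.
  by rewrite -sum1_card (sum_by_branch _ (x, y)); apply: eq_bigr => a _; rewrite sum1_card.
have S_gt0 : (0 < #|S|)%nat by apply/card_gt0P; exists x.
have entropy : INR #|X| * ln (INR #|X|) - INR #|X| * lS
    <= \big[Rplus/0]_a (INR #|Xa a| * ln (INR #|Xa a|)) := log_sum S_gt0 card_X.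
have := sumR_le (P := xpredT) (fun a _ => per_branch a).
rewrite big_split /= !sumR_mulr -!INR_sum -card_X -(sum_by_branch _ (x, y)).
(* lra compares atoms syntactically, and these occur in convertible forms *)
move=> total; set cX := INR #|X| in entropy total *.
set H := \big[Rplus/0]_a _ in entropy total *.
set T := INR (\sum_(op in X) _) in total *; clearbody cX H T; lra.
Qed.

End Kraft.

(* A map that is multiplicative on <<A>> and fixes A is the identity on <<A>>:
   its fixed points in <<A>> form a subgroup containing A. *)
Lemma fix_generators_id (gT : finGroupType) (A : {set gT}) (k : gT -> gT) :
  {in <<A>>%g &, {morph k : a b / (a * b)%g}} -> {in A, forall a, k a = a} ->
  {in <<A>>%g, forall a, k a = a}.
Proof.
move=> kM kA.
have k1 : k 1%g = 1%g.
  by apply: (@mulgI _ (k 1%g)); rewrite -kM ?group1 // !mulg1.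
pose H := [set a in <<A>>%g | k a == a].
have H_group : group_set H.
  apply/group_setP; split=> [|a b]; first by rewrite inE group1 k1 eqxx.
  rewrite !inE => /andP [Aa /eqP ka] /andP [Ab /eqP kb].
  by rewrite groupM // kM // ka kb eqxx.
have genA_H : (<<A>> \subset Group H_group)%g.
  rewrite gen_subG; apply/subsetP => a Aa.
  by rewrite inE mem_gen //= kA ?eqxx.
by move=> a /(subsetP genA_H); rewrite inE => /andP [_ /eqP].
Qed.

Lemma bijection_onto_group (gT : finGroupType) (G : {group gT}) (S : finType) :
  #|S| = #|G| ->
  exists f0 : S -> gT, exists g0 : gT -> S,
    [/\ forall s, f0 s \in G, cancel f0 g0 & {in G, cancel g0 f0}].
Proof.
move=> eq_card.
exists (fun s => enum_val (cast_ord eq_card (enum_rank s))).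
exists (fun a => enum_val (cast_ord (esym eq_card) (enum_rank_in (group1 G) a))).
split=> [s | s | a Ga]; first exact: enum_valP.
  by rewrite enum_valK_in cast_ordK enum_rankK.
by rewrite enum_valK cast_ordKV enum_rankK_in.
Qed.

Section Transport.
Variables (gT : finGroupType) (G : {group gT}) (S : finType).
Variables (f0 : S -> gT) (g0 : gT -> S).
Hypotheses (f0G : forall s, f0 s \in G) (f0K : cancel f0 g0)
  (g0K : {in G, cancel g0 f0}).

Definition transport_op (s : {perm S}) : binop S :=
  [ffun p => (s^-1)%g (g0 (f0 (s p.1) * f0 (s p.2))%g)].

Lemma transport_op_X_G s : transport_op s \in X_G S G.
Proof.
rewrite inE; apply/existsP; exists [ffun x => f0 (s x)]; apply/and3P; split.
- by apply/injectiveP => x y; rewrite !ffunE => /(can_inj f0K) /perm_inj.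
- rewrite eqEsubset; apply/andP; split.
    by apply/subsetP => a /imsetP [x _ ->]; rewrite ffunE.
  apply/subsetP => a Ga; apply/imsetP; exists ((s^-1)%g (g0 a)) => //.
  by rewrite ffunE permKV g0K.
- by apply/forallP => x; apply/forallP => y; rewrite !ffunE /= permKV g0K ?groupM.
Qed.

(* Two transports giving the same law and agreeing on the preimages of a
   generating set coincide: their quotient induces an automorphism of G
   fixing the generators. *)
Lemma transport_op_inj (A : {set gT}) (s1 s2 : {perm S}) : <<A>>%g = G ->
  transport_op s1 = transport_op s2 ->
  {in A, forall a, (s1^-1)%g (g0 a) = (s2^-1)%g (g0 a)} -> s1 = s2.
Proof.
move=> genA eq_op eq_gens; pose k a := f0 (s2 ((s1^-1)%g (g0 a))).
have AG a : a \in A -> a \in G by rewrite -genA => /mem_gen.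
have kM : {in <<A>>%g &, {morph k : a b / (a * b)%g}}.
  rewrite genA => a b Ga Gb.
  have := congr1 (fun op : binop S => op ((s1^-1)%g (g0 a), (s1^-1)%g (g0 b))) eq_op.
  rewrite /= !ffunE /= !permKV !g0K // /k => ->.
  by rewrite permKV g0K // groupM.
have kA : {in A, forall a, k a = a}.
  by move=> a Aa; rewrite /k eq_gens // permKV g0K ?AG.
apply/permP => x; apply: (can_inj f0K).
have := fix_generators_id kM kA; rewrite genA => /(_ _ (f0G (s1 x))).
by rewrite /k f0K permK.
Qed.

End Transport.

Lemma card_perm_full (T : finType) : #|{perm T}| = #|T|`!.
Proof.
rewrite -cardsT -card_perm; apply: eq_card => s; rewrite !inE.
by apply/esym/subsetP => x _; rewrite inE.
Qed.

Lemma fact_le_card_X_G (gT : finGroupType) (G : {group gT}) (S : finType)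
    (gens : seq gT) :
  #|S| = #|G| -> <<[set x in gens]>>%g = G ->
  (#|S|`! <= #|X_G S G| * expn #|S| (size gens))%nat.
Proof.
move=> eq_card genG; set r := size gens.
have [f0 [g0 [f0G f0K g0K]]] := bijection_onto_group eq_card.
pose code (s : {perm S}) :=
  (transport_op f0 g0 s, [tuple (s^-1)%g (g0 (nth 1%g gens i)) | i < r]).
have code_inj : injective code.
  move=> s1 s2 eq_code; have /= eq_tuple := congr1 snd eq_code.
  apply: (transport_op_inj f0G f0K g0K genG (congr1 fst eq_code)).
  move=> a; rewrite inE => gens_a.
  have idx_lt : (index a gens < r)%nat by rewrite index_mem.
  have := congr1 (fun u : r.-tuple S => tnth u (Ordinal idx_lt)) eq_tuple.
  by rewrite /= !tnth_mktuple nth_index.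
rewrite -card_perm_full -(card_imset _ code_inj) -card_tuple -cardsT -cardsX.
apply: subset_leq_card; apply/subsetP => _ /imsetP [s _ ->].
by rewrite inE /= transport_op_X_G // inE.
Qed.

Lemma X_G_nonempty (gT : finGroupType) (G : {group gT}) (S : finType) :
  #|S| = #|G| -> (0 < #|X_G S G|)%nat.
Proof.
move=> eq_card; have [f0 [g0 [f0G f0K g0K]]] := bijection_onto_group eq_card.
by apply/card_gt0P; exists (transport_op f0 g0 1%g); apply: transport_op_X_G.
Qed.

Section MainBound.
Local Open Scope R_scope.

Lemma expected_queries_ge (S : finType) (X : {set binop S}) (t : qtree S) :
  (0 < #|X|)%nat -> (1 < #|S|)%nat ->
  (forall op, op \in X -> run t op <> None) -> {in X &, injective (run t)} ->
  ln (INR #|X|) / ln (INR #|S|) <= expected_queries X t.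
Proof.
move=> X_gt0 S_gt1 X_runs X_inj; have := kraft_entropy X_runs X_inj.
rewrite /expected_queries; set cX := INR #|X|; set lS := ln (INR #|S|).
set T := INR (\sum_(op in X) _).
have cX_gt0 : 0 < cX by apply: lt_0_INR; apply/ltP.
have lS_gt0 : 0 < lS by apply: ln_nat_gt0.
move=> entropy; apply: (Rmult_le_reg_r (cX * lS)); first exact: Rmult_lt_0_compat.
have -> : ln cX / lS * (cX * lS) = cX * ln cX by field; lra.
by have -> : T / cX * (cX * lS) = T * lS by field; lra.
Qed.

Lemma ln_fact_le_card_X_G (gT : finGroupType) (G : {group gT}) (S : finType)
    (gens : seq gT) :
  #|S| = #|G| -> <<[set x in gens]>>%g = G ->
  ln (INR #|S|`!) <= ln (INR #|X_G S G|) + INR (size gens) * ln (INR #|S|).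
Proof.
move=> eq_card genG; have count := fact_le_card_X_G eq_card genG.
have X_gt0 := X_G_nonempty eq_card.
have S_gt0 : (0 < #|S|)%nat by rewrite eq_card cardG_gt0.
have lt0R (m : nat) : (0 < m)%nat -> 0 < INR m by move=> m_gt0; apply/lt_0_INR/ltP.
have S_pos : 0 < INR #|S| by apply: lt0R.
rewrite -ln_pow // -ln_mult; [| exact: lt0R | exact: pow_lt].
apply: ln_le; first by apply/lt0R/fact_gt0.
by rewrite -INR_expn -INR_muln; apply/le_INR/leP.
Qed.

End MainBound.

Theorem mainTheorem4 (gT : finGroupType) (G : {group gT}) (n r : nat)
  (S : finType) (t : qtree S) :
  abelian G -> #|G| = n -> (2 <= n)%N ->
  (exists gens : seq gT, size gens = r /\ <<[set x in gens]>>%g = G) ->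
  #|S| = n ->
  solves_product_recovering (X_G S G) t ->
  (expected_queries (X_G S G) t >=
     INR n - INR n / ln (INR n) + 1 / 2 - INR r)%R.
Proof.
move=> _ card_G n_ge2 [gens [size_gens genG]] card_S [X_runs X_inj _].
have card_SG : #|S| = #|G| by rewrite card_S.
have S_gt1 : (1 < #|S|)%N by rewrite card_S.
have X_runs' op : op \in X_G S G -> run t op <> None by case/X_runs => p ->.
have mean := expected_queries_ge (X_G_nonempty card_SG) S_gt1 X_runs' X_inj.
have counting := ln_fact_le_card_X_G card_SG genG.
have stirling := ln_fact_lower (ltnW n_ge2).
rewrite size_gens card_S in mean counting.
have L_gt0 := ln_nat_gt0 n_ge2.
apply/Rle_ge/(Rle_trans _ _ _ _ mean)/(Rmult_le_reg_r _ _ _ L_gt0).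
rewrite Rdiv_def Rmult_assoc Rinv_l ?Rmult_1_r; last lra.
set L := ln (INR n) in L_gt0 stirling counting *.
have -> : ((INR n - INR n / L + 1 / 2 - INR r) * L
           = (INR n + / 2) * L - INR n - INR r * L)%R by field; lra.
lra.
Qed.
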